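(* Let $a\ge0$, $N\ge2$, and let $X_t$ be the continuous-time Markov chain on $\{0,1,\dots,N\}$ with transitions $j\to j+1$ at rate $a\,j(j-1)(N-j)/(N(N-1))$ and $j\to j-1$ at rate $j$, started from $X_0=N$. For $j=1,\dots,N$ let $\tau_j=\int_0^\infty P(X_t=j\mid X_0=N)\,dt$. Then $$\sum_{j=1}^N j\,\tau_j\le\sum_{j=1}^N\sum_{i=0}^j(a/4)^i.$$
   Context: The chain $X_t$ is the number of individuals in a single patch of the $N$-patch model when the outer birth rate is $b=0$. *)

From Stdlib Require Import Reals Lra.
Open Scope R_scope.

Definition up_rate (a : R) (N j : nat) : R :=
  a * INR j * (INR j - 1) * (INR N - INR j) / (INR N * (INR N - 1)).

Definition down_rate (j : nat) : R := INR j.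

(* Right-hand side of the Kolmogorov forward equation for state j in {0..N},
   given the distribution q : nat -> R at some time. *)
Definition fwd_rhs (a : R) (N : nat) (q : nat -> R) (j : nat) : R :=
  (match j with O => 0 | S k => up_rate a N k * q k end)
  + (if (j <? N)%nat then down_rate (S j) * q (S j) else 0)
  - (up_rate a N j + down_rate j) * q j.

(* p t j = P(X_t = j | X_0 = N): the (unique) solution of the forward
   Kolmogorov equations with initial distribution concentrated at N. *)
Definition is_transition_from_N (a : R) (N : nat) (p : R -> nat -> R) : Prop :=
  (forall j, (j <= N)%nat -> p 0 j = if Nat.eqb j N then 1 else 0) /\
  (forall j t, (j <= N)%nat ->
     derivable_pt_lim (fun s => p s j) t (fwd_rhs a N (p t) j)).

(* The occupation times tau_j are finite because of a Lyapunov function.  Let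
   g m = sum_(i <= m) (a/4)^i and w j = sum_(k < j) g (N - k).  Since the birth rate at j is at
   most j a/4 and g (m+1) = 1 + (a/4) g m, the generator L satisfies L w j <= - j.  Dynkin's
   formula then makes t |-> sum_j w j P(X_t = j) + sum_j j int_0^t P(X_s = j) ds nonincreasing
   (the first sum is nonnegative because the forward equation preserves positivity, which we
   get from Gronwall's inequality applied to the squared negative parts), so
   sum_j j int_0^T P(X_s = j) ds <= w N, which is exactly the right-hand side.  The integrals
   are nondecreasing in T and bounded, hence converge. *)

From Stdlib Require Import Reals Lra Lia Psatz Classical.
From Coquelicot Require Import Coquelicot.
Open Scope R_scope.

Lemma derivable_pt_lim_sum_f_R0 (F : nat -> R -> R) (dF : nat -> R) (t : R) (n : nat) :
  (forall k, (k <= n)%nat -> derivable_pt_lim (F k) t (dF k)) ->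
  derivable_pt_lim (fun s => sum_f_R0 (fun k => F k s) n) t (sum_f_R0 dF n).
Proof.
  induction n as [|n IH]; intros HF; simpl.
  - apply HF; lia.
  - apply (derivable_pt_lim_plus (fun s => sum_f_R0 (fun k => F k s) n) (F (S n))).
    + apply IH; intros; apply HF; lia.
    + apply HF; lia.
Qed.

Lemma is_lim_sum_f_R0 (F : nat -> R -> R) (l : nat -> R) (x : Rbar) (n : nat) :
  (forall k, (k <= n)%nat -> is_lim (F k) x (l k)) ->
  is_lim (fun y => sum_f_R0 (fun k => F k y) n) x (sum_f_R0 l n).
Proof.
  induction n as [|n IH]; intros HF; simpl.
  - apply HF; lia.
  - apply is_lim_plus'.
    + apply IH; intros; apply HF; lia.
    + apply HF; lia.
Qed.

Lemma sum_f_R0_nonneg (f : nat -> R) (n : nat) :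
  (forall k, (k <= n)%nat -> 0 <= f k) -> 0 <= sum_f_R0 f n.
Proof.
  induction n as [|n IH]; intros Hf; simpl.
  - apply Hf; lia.
  - assert (0 <= sum_f_R0 f n) by (apply IH; intros; apply Hf; lia).
    pose proof (Hf (S n) (le_n _)); lra.
Qed.

Lemma le_sum_f_R0_term (f : nat -> R) (n k : nat) :
  (forall i, (i <= n)%nat -> 0 <= f i) -> (k <= n)%nat -> f k <= sum_f_R0 f n.
Proof.
  induction n as [|n IH]; intros Hf Hk; simpl.
  - replace k with 0%nat by lia; lra.
  - pose proof (Hf (S n) (le_n _)).
    destruct (Nat.eq_dec k (S n)) as [->|Hne].
    + assert (0 <= sum_f_R0 f n) by (apply sum_f_R0_nonneg; intros; apply Hf; lia); lra.
    + assert (f k <= sum_f_R0 f n) by (apply IH; [intros; apply Hf | ]; lia); lra.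
Qed.

Lemma sum_f_R0_rev (g : nat -> R) (n : nat) :
  sum_f_R0 (fun j => g (n - j)%nat) n = sum_f_R0 g n.
Proof.
  induction n as [|n IH]; [reflexivity|].
  rewrite decomp_sum by lia. cbn [pred]. rewrite Nat.sub_0_r.
  rewrite (sum_eq _ (fun j => g (n - j)%nat)) by (intros; f_equal; lia).
  rewrite IH. cbn [sum_f_R0]. ring.
Qed.

Lemma le_of_derive_nonpos (f f' : R -> R) :
  (forall t, derivable_pt_lim f t (f' t)) -> (forall t, 0 <= t -> f' t <= 0) ->
  forall T, 0 <= T -> f T <= f 0.
Proof.
  intros Hf Hf' T HT.
  destruct (Rle_lt_or_eq_dec 0 T HT) as [HT0|<-]; [|lra].
  destruct (MVT_cor2 f f' 0 T HT0 (fun c _ => Hf c)) as [c [Ec Hc]].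
  pose proof (Hf' c ltac:(lra)). nra.
Qed.

(* Integrating factor [exp (- C t)]. *)
Lemma gronwall_nonpos (f f' : R -> R) (C : R) :
  (forall t, derivable_pt_lim f t (f' t)) -> (forall t, 0 <= t -> f' t <= C * f t) ->
  f 0 <= 0 -> forall T, 0 <= T -> f T <= 0.
Proof.
  intros Hf Hf' Hf0 T HT.
  set (h := fun t => exp (- C * t) * f t).
  assert (Hh : forall t, derivable_pt_lim h t (- C * exp (- C * t) * f t + exp (- C * t) * f' t)).
  { intros t. apply (derivable_pt_lim_mult (fun t => exp (- C * t)) f); [|apply Hf].
    apply is_derive_Reals. auto_derive; [easy | ring]. }
  assert (HhT : h T <= h 0).
  { apply (le_of_derive_nonpos h _ Hh); [|exact HT].
    intros t Ht. pose proof (exp_pos (- C * t)). pose proof (Hf' t Ht). nra. }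
  unfold h in HhT. rewrite Rmult_0_r, exp_0 in HhT.
  pose proof (exp_pos (- C * T)). nra.
Qed.

Lemma is_lim_nondecreasing_bounded (f : R -> R) (W : R) :
  (forall x y, 0 <= x -> x <= y -> f x <= f y) -> (forall x, 0 <= x -> f x <= W) ->
  exists l : R, is_lim f p_infty l.
Proof.
  intros Hmono Hbd.
  set (E := fun y => exists x, 0 <= x /\ y = f x).
  destruct (completeness E) as [l [Hub Hleast]].
  - exists W. intros y [x [Hx ->]]. auto.
  - exists (f 0), 0. split; [lra | reflexivity].
  - exists l. apply is_lim_spec. intros eps.
    assert (Hx0 : exists x0, 0 <= x0 /\ l - eps < f x0).
    { apply not_all_not_ex. intros Hno.
      assert (l <= l - eps); [|destruct eps; simpl in *; lra].
      apply Hleast. intros y [x [Hx ->]].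
      apply Rnot_lt_le. intros Hlt. apply (Hno x). auto. }
    destruct Hx0 as [x0 [Hx0 Hlt]].
    exists x0. intros x Hx.
    assert (f x0 <= f x) by (apply Hmono; lra).
    assert (f x <= l) by (apply Hub; exists x; split; [lra | reflexivity]).
    apply Rabs_def1; destruct eps; simpl in *; lra.
Qed.

Definition neg_part (x : R) : R := Rmin x 0.

Lemma neg_part_spec (x : R) :
  neg_part x <= 0 /\ neg_part x <= x /\ neg_part x * x = neg_part x * neg_part x.
Proof. unfold neg_part, Rmin; destruct (Rle_dec x 0); nra. Qed.

Lemma neg_part_eq0 (x : R) : 0 <= x -> neg_part x = 0.
Proof. intros Hx. unfold neg_part, Rmin. destruct (Rle_dec x 0); lra. Qed.

Lemma neg_part_sq_le0 (x : R) : neg_part x * neg_part x <= 0 -> 0 <= x.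
Proof. unfold neg_part, Rmin. destruct (Rle_dec x 0); nra. Qed.

Lemma derivable_pt_lim_neg_part_sq (x : R) :
  derivable_pt_lim (fun y => neg_part y * neg_part y) x (2 * neg_part x).
Proof.
  intros eps Heps. exists (mkposreal eps Heps). intros h Hh Hlt. simpl in Hlt.
  assert (Htaylor : Rabs (neg_part (x + h) * neg_part (x + h) - neg_part x * neg_part x
                          - 2 * neg_part x * h) <= h * h).
  { apply Rabs_le. unfold neg_part, Rmin.
    destruct (Rle_dec (x + h) 0); destruct (Rle_dec x 0); split; nra. }
  replace (_ / h - _) with ((neg_part (x + h) * neg_part (x + h) - neg_part x * neg_part x
                             - 2 * neg_part x * h) / h) by (field; auto).
  rewrite Rabs_div by auto.
  apply Rle_lt_trans with (h * h / Rabs h).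
  - apply Rmult_le_compat_r; [|exact Htaylor].
    apply Rlt_le, Rinv_0_lt_compat, Rabs_pos_lt; auto.
  - assert (Habs : 0 < Rabs h) by (apply Rabs_pos_lt; auto).
    replace (h * h) with (Rabs h * Rabs h)
      by (rewrite <- Rabs_mult; apply Rabs_right; nra).
    field_simplify; lra.
Qed.

Lemma neg_part_mul_le (x y c Cb F : R) : 0 <= c <= Cb ->
  neg_part x * neg_part x <= F -> neg_part y * neg_part y <= F ->
  2 * neg_part x * (c * y) <= 2 * Cb * F.
Proof.
  intros Hc Hx Hy.
  destruct (neg_part_spec x) as [Hx0 _], (neg_part_spec y) as [_ [Hy1 _]].
  assert (0 <= - neg_part x * c * (y - neg_part y)) by (apply Rmult_le_pos; nra).
  pose proof (Rle_0_sqr (neg_part x - neg_part y)). unfold Rsqr in *.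
  nra.
Qed.

Lemma up_rate_nonneg (a : R) (N j : nat) : 0 <= a -> (2 <= N)%nat -> (j <= N)%nat ->
  0 <= up_rate a N j.
Proof.
  intros Ha HN Hj. unfold up_rate.
  assert (2 <= INR N) by (apply (le_INR 2); lia).
  assert (INR j <= INR N) by (apply le_INR; lia).
  apply Rmult_le_pos; [|apply Rlt_le, Rinv_0_lt_compat; nra].
  destruct j as [|j]; [simpl; lra|].
  assert (1 <= INR (S j)) by (apply (le_INR 1); lia).
  apply Rmult_le_pos; [apply Rmult_le_pos; [apply Rmult_le_pos|]|]; lra.
Qed.

(* From [4 (j - 1) (N - j) <= N (N - 1)], i.e. [(2 j - 1 - N)^2 >= 0]. *)
Lemma up_rate_le (a : R) (N j : nat) : 0 <= a -> (2 <= N)%nat -> (j <= N)%nat ->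
  up_rate a N j <= INR j * (a / 4).
Proof.
  intros Ha HN Hj. unfold up_rate.
  assert (2 <= INR N) by (apply (le_INR 2); lia).
  assert (INR j <= INR N) by (apply le_INR; lia).
  assert (0 <= INR j) by apply pos_INR.
  assert (Hd : 0 < INR N * (INR N - 1)) by nra.
  apply (Rmult_le_reg_r _ _ _ Hd). unfold Rdiv at 1.
  rewrite Rmult_assoc, Rinv_l, Rmult_1_r by lra.
  pose proof (Rle_0_sqr (2 * INR j - 1 - INR N)). unfold Rsqr in *.
  assert (0 <= a * INR j) by nra.
  nra.
Qed.

Lemma down_rate_nonneg (j : nat) : 0 <= down_rate j.
Proof. apply pos_INR. Qed.

Lemma neg_part_fwd_rhs_le (a : R) (N : nat) (q : nat -> R) (j : nat) :
  0 <= a -> (2 <= N)%nat -> (j <= N)%nat ->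
  2 * neg_part (q j) * fwd_rhs a N q j
    <= 2 * (INR N * (a / 4) + INR N) * sum_f_R0 (fun i => neg_part (q i) * neg_part (q i)) N.
Proof.
  intros Ha HN Hj.
  set (F := sum_f_R0 _ N).
  assert (HF : forall i, (i <= N)%nat -> neg_part (q i) * neg_part (q i) <= F).
  { intros i Hi. apply (le_sum_f_R0_term (fun i => neg_part (q i) * neg_part (q i))); auto.
    intros; nra. }
  assert (HF0 : 0 <= F) by (pose proof (HF 0%nat ltac:(lia)); nra).
  assert (HaN0 : 0 <= INR N * (a / 4)) by (apply Rmult_le_pos; [apply pos_INR | lra]).
  assert (Hbirth : 2 * neg_part (q j) * (match j with O => 0 | S k => up_rate a N k * q k end)
                   <= 2 * (INR N * (a / 4)) * F).
  { destruct j as [|k]; [rewrite Rmult_0_r; nra|].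
    apply neg_part_mul_le; try (apply HF; lia).
    split; [apply up_rate_nonneg; auto; lia|].
    apply Rle_trans with (INR k * (a / 4)); [apply up_rate_le; auto; lia|].
    apply Rmult_le_compat_r; [lra | apply le_INR; lia]. }
  assert (Hdeath : 2 * neg_part (q j) * (if (j <? N)%nat then down_rate (S j) * q (S j) else 0)
                   <= 2 * INR N * F).
  { destruct (Nat.ltb_spec j N) as [HjN|_]; [|rewrite Rmult_0_r; pose proof (pos_INR N); nra].
    apply neg_part_mul_le; try (apply HF; lia).
    split; [apply down_rate_nonneg | apply le_INR; lia]. }
  assert (0 <= (up_rate a N j + down_rate j) * (neg_part (q j) * neg_part (q j))).
  { pose proof (up_rate_nonneg a N j Ha HN Hj). pose proof (down_rate_nonneg j).
    apply Rmult_le_pos; nra. }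
  destruct (neg_part_spec (q j)) as [_ [_ Hsq]].
  unfold fwd_rhs.
  set (birth := match j with O => 0 | S k => _ end) in *.
  set (death := if (j <? N)%nat then _ else 0) in *.
  replace (2 * neg_part (q j) * (birth + death - (up_rate a N j + down_rate j) * q j))
    with (2 * neg_part (q j) * birth + 2 * neg_part (q j) * death
          - 2 * ((up_rate a N j + down_rate j) * (neg_part (q j) * q j))) by ring.
  rewrite Hsq. lra.
Qed.

Lemma transition_nonneg (a : R) (N : nat) (p : R -> nat -> R) :
  0 <= a -> (2 <= N)%nat -> is_transition_from_N a N p ->
  forall t j, 0 <= t -> (j <= N)%nat -> 0 <= p t j.
Proof.
  intros Ha HN [Hinit Hderiv] t j Ht Hj.
  set (neg_mass := fun s => sum_f_R0 (fun i => neg_part (p s i) * neg_part (p s i)) N).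
  assert (Hmass : neg_mass t <= 0).
  { apply (gronwall_nonpos neg_mass
             (fun s => sum_f_R0 (fun i => 2 * neg_part (p s i) * fwd_rhs a N (p s) i) N)
             (2 * (INR N * (a / 4) + INR N) * INR (S N))); auto.
    - intros s. apply (derivable_pt_lim_sum_f_R0 (fun i s => neg_part (p s i) * neg_part (p s i))).
      intros i Hi.
      apply (derivable_pt_lim_comp (fun s => p s i) (fun y => neg_part y * neg_part y)).
      + apply Hderiv; auto.
      + apply derivable_pt_lim_neg_part_sq.
    - intros s _.
      apply Rle_trans with (sum_f_R0 (fun _ => 2 * (INR N * (a / 4) + INR N) * neg_mass s) N).
      + apply sum_Rle. intros i Hi. apply neg_part_fwd_rhs_le; auto.
      + rewrite sum_cte. apply Req_le. ring.
    - unfold neg_mass. rewrite (sum_eq _ (fun _ => 0)); [rewrite sum_cte; lra|].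
      intros i Hi. rewrite neg_part_eq0; [ring|].
      rewrite Hinit by auto. destruct (i =? N)%nat; lra. }
  apply neg_part_sq_le0, Rle_trans with (neg_mass t); [|exact Hmass].
  apply (le_sum_f_R0_term (fun i => neg_part (p t i) * neg_part (p t i))); auto.
  intros; nra.
Qed.

Definition generator (a : R) (N : nat) (w : nat -> R) (j : nat) : R :=
  up_rate a N j * (w (S j) - w j) + down_rate j * (w (pred j) - w j).

Lemma sum_fwd_rhs_partial (a : R) (N : nat) (w q : nat -> R) (m : nat) : (m < N)%nat ->
  sum_f_R0 (fun j => w j * fwd_rhs a N q j) m =
  sum_f_R0 (fun j => q j * generator a N w j) m
  - up_rate a N m * q m * w (S m) + w m * down_rate (S m) * q (S m).
Proof.
  induction m as [|m IH]; intros Hm; cbn [sum_f_R0]; [|rewrite IH by lia];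
    unfold fwd_rhs at 1; rewrite (proj2 (Nat.ltb_lt _ N)) by lia;
    unfold generator, down_rate; simpl; ring.
Qed.

Lemma sum_fwd_rhs_generator (a : R) (N : nat) (w q : nat -> R) : (1 <= N)%nat ->
  sum_f_R0 (fun j => w j * fwd_rhs a N q j) N = sum_f_R0 (fun j => q j * generator a N w j) N.
Proof.
  intros HN. destruct N as [|M]; [lia|].
  cbn [sum_f_R0]. rewrite sum_fwd_rhs_partial by lia.
  unfold fwd_rhs at 1. rewrite Nat.ltb_irrefl.
  assert (Hup : up_rate a (S M) (S M) = 0) by (unfold up_rate, Rdiv; ring).
  unfold generator. rewrite Hup. cbn [pred]. ring.
Qed.

Definition geom_sum (r : R) (m : nat) : R := sum_f_R0 (fun i => r ^ i) m.

Lemma geom_sum_ge1 (r : R) (m : nat) : 0 <= r -> 1 <= geom_sum r m.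
Proof.
  intros Hr. unfold geom_sum. induction m as [|m IH]; cbn [sum_f_R0]; [simpl; lra|].
  pose proof (pow_le r (S m) Hr). lra.
Qed.

Lemma geom_sum_S (r : R) (m : nat) : geom_sum r (S m) = 1 + r * geom_sum r m.
Proof.
  unfold geom_sum. induction m as [|m IH]; [simpl; ring|].
  cbn [sum_f_R0] in *. rewrite IH at 1. simpl. ring.
Qed.

Fixpoint weight (r : R) (N j : nat) : R :=
  match j with O => 0 | S k => weight r N k + geom_sum r (N - k) end.

Lemma weight_nonneg (r : R) (N j : nat) : 0 <= r -> 0 <= weight r N j.
Proof.
  intros Hr. induction j as [|j IH]; simpl; [lra|].
  pose proof (geom_sum_ge1 r (N - j) Hr). lra.
Qed.

Lemma generator_weight_le (a : R) (N j : nat) : 0 <= a -> (2 <= N)%nat -> (j <= N)%nat ->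
  generator a N (weight (a / 4) N) j + INR j <= 0.
Proof.
  intros Ha HN Hj. unfold generator, down_rate. destruct j as [|k].
  - unfold up_rate. simpl. lra.
  - cbn [pred weight].
    replace (N - k)%nat with (S (N - S k)) by lia.
    rewrite geom_sum_S.
    pose proof (up_rate_le a N (S k) Ha HN Hj).
    pose proof (geom_sum_ge1 (a / 4) (N - S k) ltac:(lra)).
    nra.
Qed.

Lemma weight_diag (r : R) (N : nat) : (1 <= N)%nat ->
  weight r N N = sum_f_R0 (fun k => geom_sum r (S k)) (N - 1).
Proof.
  intros HN.
  assert (Hweight : forall j, weight r N (S j) = sum_f_R0 (fun k => geom_sum r (N - k)) j).
  { induction j as [|j IH]; [simpl; ring|]. cbn [weight sum_f_R0] in *. now rewrite IH. }
  destruct N as [|M]; [lia|]. rewrite Hweight, Nat.sub_1_r.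
  rewrite (sum_eq _ (fun k => geom_sum r (S (M - k)))) by (intros; f_equal; lia).
  apply (sum_f_R0_rev (fun k => geom_sum r (S k))).
Qed.

Section Occupation.

Variables (a : R) (N : nat) (p : R -> nat -> R).
Hypotheses (Ha : 0 <= a) (HN : (2 <= N)%nat) (Hp : is_transition_from_N a N p).

Definition occupation (j : nat) (T : R) : R := RInt (fun s => p s j) 0 T.

Lemma occupation_0 (j : nat) : occupation j 0 = 0.
Proof. unfold occupation. now rewrite RInt_point. Qed.

Lemma continuity_pt_transition (j : nat) (t : R) : (j <= N)%nat ->
  continuity_pt (fun s => p s j) t.
Proof.
  intros Hj. apply derivable_continuous_pt.
  exists (fwd_rhs a N (p t) j). apply (proj2 Hp); auto.
Qed.

Lemma ex_RInt_transition (j : nat) (x y : R) : (j <= N)%nat -> ex_RInt (fun s => p s j) x y.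
Proof.
  intros Hj. apply (@ex_RInt_continuous R_CompleteNormedModule).
  intros t _. apply continuity_pt_filterlim, continuity_pt_transition; auto.
Qed.

Lemma derivable_pt_lim_occupation (j : nat) (t : R) : (j <= N)%nat ->
  derivable_pt_lim (occupation j) t (p t j).
Proof.
  intros Hj. apply is_derive_Reals, (is_derive_RInt (fun s => p s j) (occupation j) 0).
  - apply filter_forall. intros x.
    apply (@RInt_correct R_CompleteNormedModule), ex_RInt_transition; auto.
  - apply continuity_pt_filterlim, continuity_pt_transition; auto.
Qed.

Lemma occupation_nondecreasing (j : nat) (T1 T2 : R) : (j <= N)%nat ->
  0 <= T1 -> T1 <= T2 -> occupation j T1 <= occupation j T2.
Proof.
  intros Hj HT1 HT12. unfold occupation.
  rewrite <- (RInt_Chasles (fun s => p s j) 0 T1 T2) by (apply ex_RInt_transition; auto).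
  assert (0 <= RInt (fun s => p s j) T1 T2).
  { apply RInt_ge_0; [exact HT12 | apply ex_RInt_transition; auto |]. intros x Hx.
    apply (transition_nonneg a N p); auto; lra. }
  change plus with Rplus. lra.
Qed.

Lemma occupation_nonneg (j : nat) (T : R) : (j <= N)%nat -> 0 <= T -> 0 <= occupation j T.
Proof.
  intros Hj HT. rewrite <- (occupation_0 j).
  apply occupation_nondecreasing; auto; lra.
Qed.

Lemma occupation_weighted_sum_le (T : R) : 0 <= T ->
  sum_f_R0 (fun k => INR (S k) * occupation (S k) T) (N - 1) <= weight (a / 4) N N.
Proof.
  intros HT.
  set (w := weight (a / 4) N).
  set (K := fun t => sum_f_R0 (fun j => w j * p t j) N
                     + sum_f_R0 (fun k => INR (S k) * occupation (S k) t) (N - 1)).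
  set (K' := fun t => sum_f_R0 (fun j => w j * fwd_rhs a N (p t) j) N
                      + sum_f_R0 (fun k => INR (S k) * p t (S k)) (N - 1)).
  assert (HK : forall t, derivable_pt_lim K t (K' t)).
  { intros t. apply derivable_pt_lim_plus.
    - apply (derivable_pt_lim_sum_f_R0 (fun j t => w j * p t j)). intros j Hj.
      apply derivable_pt_lim_scal, (proj2 Hp); auto.
    - apply (derivable_pt_lim_sum_f_R0 (fun k t => INR (S k) * occupation (S k) t)).
      intros k Hk. apply derivable_pt_lim_scal, derivable_pt_lim_occupation; lia. }
  assert (HK' : forall t, 0 <= t -> K' t <= 0).
  { intros t Ht. unfold K'.
    rewrite sum_fwd_rhs_generator by lia.
    replace (sum_f_R0 (fun k => INR (S k) * p t (S k)) (N - 1))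
      with (sum_f_R0 (fun j => INR j * p t j) N)
      by (rewrite (decomp_sum _ N), Nat.sub_1_r by lia; simpl; ring).
    rewrite <- plus_sum.
    apply Rle_trans with (sum_f_R0 (fun _ => 0) N); [|rewrite sum_cte; lra].
    apply sum_Rle. intros j Hj.
    pose proof (generator_weight_le a N j Ha HN Hj).
    pose proof (transition_nonneg a N p Ha HN Hp t j Ht Hj).
    unfold w. nra. }
  assert (HK0 : K 0 = w N).
  { unfold K. rewrite (sum_eq _ (fun _ => 0) (N - 1))
      by (intros; rewrite occupation_0; apply Rmult_0_r).
    destruct N as [|M]; [lia|]. cbn [sum_f_R0].
    rewrite (sum_eq _ (fun _ => 0) M).
    2:{ intros i Hi. rewrite (proj1 Hp) by lia.
        destruct (Nat.eqb_spec i (S M)); [lia | ring]. }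
    rewrite !sum_cte, (proj1 Hp), Nat.eqb_refl by lia. ring. }
  assert (0 <= sum_f_R0 (fun j => w j * p T j) N).
  { apply sum_f_R0_nonneg. intros j Hj. apply Rmult_le_pos.
    - apply weight_nonneg; lra.
    - apply (transition_nonneg a N p); auto. }
  pose proof (le_of_derive_nonpos K K' HK HK' T HT).
  unfold K in *. fold w. lra.
Qed.

Lemma is_lim_occupation (j : nat) : (1 <= j <= N)%nat ->
  is_lim (occupation j) p_infty (real (Lim (occupation j) p_infty)).
Proof.
  intros Hj.
  destruct (is_lim_nondecreasing_bounded (occupation j) (weight (a / 4) N N)) as [l Hl].
  - intros x y Hx Hxy. apply occupation_nondecreasing; auto; lia.
  - intros T HT. destruct j as [|k]; [lia|].
    apply Rle_trans with (INR (S k) * occupation (S k) T).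
    + assert (1 <= INR (S k)) by (apply (le_INR 1); lia).
      pose proof (occupation_nonneg (S k) T ltac:(lia) HT). nra.
    + apply Rle_trans with (2 := occupation_weighted_sum_le T HT).
      apply (le_sum_f_R0_term (fun k => INR (S k) * occupation (S k) T)); [|lia].
      intros i Hi. apply Rmult_le_pos; [apply pos_INR | apply occupation_nonneg; auto; lia].
  - now rewrite (is_lim_unique _ _ _ Hl).
Qed.

End Occupation.

Theorem lemma11p1 (a : R) (N : nat) (p : R -> nat -> R) :
  0 <= a -> (2 <= N)%nat ->
  is_transition_from_N a N p ->
  exists tau : nat -> R,
    (forall j, (1 <= j <= N)%nat ->
       (forall T, 0 <= T -> inhabited (Riemann_integrable (fun t => p t j) 0 T)) /\
       (forall eps, eps > 0 -> exists M, forall T (pr : Riemann_integrable (fun t => p t j) 0 T),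
          M <= T -> Rabs (RiemannInt pr - tau j) < eps)) /\
    sum_f_R0 (fun k => INR (S k) * tau (S k)) (N - 1)
      <= sum_f_R0 (fun k => sum_f_R0 (fun i => (a / 4) ^ i) (S k)) (N - 1).
Proof.
  intros Ha HN Hp.
  set (tau := fun j => real (Lim (occupation p j) p_infty)).
  exists tau. split.
  - intros j Hj. split.
    + intros T HT. constructor. apply continuity_implies_RiemannInt; auto.
      intros t _. apply (continuity_pt_transition a N); auto; lia.
    + intros eps Heps.
      destruct (proj2 (is_lim_spec _ _ _) (is_lim_occupation a N p Ha HN Hp j Hj)
                  (mkposreal eps Heps)) as [M HM].
      exists (M + 1). intros T pr HT.
      rewrite <- (RInt_Reals _ _ _ pr). apply (HM T). lra.
  - replace (sum_f_R0 (fun k => sum_f_R0 _ (S k)) (N - 1)) with (weight (a / 4) N N) by (apply weight_diag; lia).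
    apply (is_lim_le_loc (fun T => sum_f_R0 (fun k => INR (S k) * occupation p (S k) T) (N - 1))
             (fun _ => weight (a / 4) N N) p_infty
             (sum_f_R0 (fun k => INR (S k) * tau (S k)) (N - 1)) (weight (a / 4) N N)).
    + exists 0. intros T HT. apply (occupation_weighted_sum_le a N); auto; lra.
    + apply (is_lim_sum_f_R0 (fun k T => INR (S k) * occupation p (S k) T)).
      intros k Hk. apply (is_lim_scal_l _ _ _ (tau (S k))).
      apply (is_lim_occupation a N); auto; lia.
    + apply is_lim_const.
Qed.
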